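(* Let $V=(J,(V_j)_{j\in J},d,H)$ be a hypergraph system, $(\nu_e)_{e\in H}$ a pseudorandom system of measures on $V$, and for each $e\in H$ let $f_e:V_e\to\mathbb{R}$ satisfy $|f_e(x_e)|\le\nu_e(x_e)$ for all $x_e\in V_e$. For $J'\subseteq J$ define $$Q_{J'}:=\mathbb{E}\Big(\prod_{e\in H:\,J'\subseteq e}\ \prod_{\omega\in\{0,1\}^{J'}}f_e(x^{(\omega)}_e)\prod_{e\in H:\,J'\not\subseteq e}\ \prod_{\omega\in\{0,1\}^{e\cap J'}}\nu_e(x^{(\omega)}_e)\ \Big|\ x^{(0)}_J,x^{(1)}_J\in V_J,\ x^{(0)}_{J\setminus J'}=x^{(1)}_{J\setminus J'}\Big),$$ where in $x^{(\omega)}_e$ the tuple $\omega$ (defined on $J'$ or on $e\cap J'$) is extended arbitrarily to $e$ (the choice is irrelevant since $x^{(0)}_{J\setminus J'}=x^{(1)}_{J\setminus J'}$). Then for every $J'\subsetneq J$ and every $j_0\in J\setminus J'$, $$|Q_{J'}|\le(1+o_{N\to\infty}(1))\,|Q_{J'\cup\{j_0\}}|^{1/2}.$$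
   Context: A hypergraph system is a quadruple $V=(J,(V_j)_{j\in J},d,H)$ where $J$ is a finite set, each $V_j$ is a finite nonempty set, $d\ge1$ is an integer and $H\subseteq\binom{J}{d}:=\{e\subseteq J:|e|=d\}$; for $e\subseteq J$ put $V_e:=\prod_{j\in e}V_j$. For a finite nonempty set $Z$ and $f:Z\to\mathbb{R}$, $\mathbb{E}(f(x)\mid x\in Z):=|Z|^{-1}\sum_{x\in Z}f(x)$; constraints written after the bar mean uniform averaging over all tuples satisfying them. All objects depend on a parameter $N$ ranging over a sequence tending to infinity while $J,d,H$ are fixed; implicit constants may depend on $J$; $o_{N\to\infty}(1)$ is a quantity tending to $0$ as $N\to\infty$ uniformly in the $f_e$; $O_K(1)$ is a quantity bounded by a constant depending on $K$ (and $J$). Cube notation: for a finite set $e$, $\{0,1\}^e$ is the set of tuples $\omega=(\omega_j)_{j\in e}$ with $\omega_j\in\{0,1\}$, and $0^e$ is the all-zero tuple; for $x^{(0)}_J=(x^{(0)}_j)_{j\in J},x^{(1)}_J\in V_J$, $e\subseteq J$ and $\omega\in\{0,1\}^e$, set $x^{(\omega)}_e:=(x^{(\omega_j)}_j)_{j\in e}\in V_e$ and $x^{(a)}_e:=(x^{(a)}_j)_{j\in e}$ for $a\in\{0,1\}$. A system of measures is a family of functions $\nu_e:V_e\to[0,\infty)$, $e\in H$, with $\mathbb{E}(\nu_e(x_e)\mid x_e\in V_e)=1+o_{N\to\infty}(1)$. For $e\in H$ and $f:V_e\to\mathbb{R}$, $\mathcal{D}_ef(x^{(0)}_e):=\mathbb{E}\big(\prod_{\omega\in\{0,1\}^e,\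 \omega\neq 0^e}f(x^{(\omega)}_e)\mid x^{(1)}_e\in V_e\big)$. The system is pseudorandom if: (i) $\mathcal{D}_e(\nu_e+1)(x_e)=O(1)$ for all $e\in H$, $x_e\in V_e$; (ii) for every choice of exponents $n_{e,\omega}\in\{0,1\}$, $\mathbb{E}\big(\prod_{e\in H}\prod_{\omega\in\{0,1\}^e}\nu_e(x^{(\omega)}_e)^{n_{e,\omega}}\mid x^{(0)}_J,x^{(1)}_J\in V_J\big)=1+o_{N\to\infty}(1)$; (iii) for every $e\in H$, $j\in e$, every choice of $n_{e,\omega}\in\{0,1\}$ and every integer $K\ge0$, $\mathbb{E}\Big(\mathbb{E}\big(\prod_{\omega\in\{0,1\}^e}\nu_e(x^{(\omega)}_e)^{n_{e,\omega}}\mid x^{(0)}_j,x^{(1)}_j\in V_j\big)^K\ \Big|\ x^{(0)}_{e\setminus\{j\}},x^{(1)}_{e\setminus\{j\}}\in V_{e\setminus\{j\}}\Big)=O_K(1)$. *)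

From HB Require Import structures.
From mathcomp Require Import all_boot all_order all_algebra.
From mathcomp Require Import reals.
Set Implicit Arguments. Unset Strict Implicit. Unset Printing Implicit Defensive.
Import Order.TTheory GRing.Theory Num.Theory.
Local Open Scope ring_scope.

Section Defs.
Variable R : realType.

Definition avgP (T : finType) (P : pred T) (F : T -> R) : R :=
  (\sum_(t | P t) F t) / (#|P|%:R).

Definition avg (T : finType) (F : T -> R) : R := avgP predT F.

Variable J : finType.

Definition subJ (e : {set J}) : finType := {j : J | j \in e}.

Variable V : J -> finType.

Definition VJ : finType := {dffun forall j : J, V j}.
Definition Ve (e : {set J}) : finType := {dffun forall i : subJ e, V (val i)}.

Definition restr (e : {set J}) (x : VJ) : Ve e :=
  @finfun (subJ e) (fun i => V (val i)) (fun i => x (val i)).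

End Defs.

(* cube mixing: x^(omega) where omega is encoded by the set w of coordinates
   where omega = 1 *)
Definition mix (I : finType) (T : I -> finType)
  (x0 x1 : {dffun forall i : I, T i}) (w : {set I}) : {dffun forall i : I, T i} :=
  @finfun I T (fun i => if i \in w then x1 i else x0 i).

Section Main.
Variable R : realType.
Local Open Scope ring_scope.

Definition tends_to (u : nat -> R) (l : R) : Prop :=
  forall eps : R, 0 < eps -> exists N0 : nat, forall N : nat, (N0 <= N)%N ->
    `|u N - l| <= eps.

Variable J : finType.

Definition hypergraph_system (V : J -> finType) (d : nat) (H : {set {set J}}) : Prop :=
  [/\ (1 <= d)%N, (forall e, e \in H -> #|e| = d) & (forall j, 0 < #|V j|)%N].

Definition Dop (V : J -> finType) (e : {set J}) (F : Ve V e -> R) (y0 : Ve V e) : R :=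
  avg (fun y1 : Ve V e =>
    \prod_(w in powerset [set: subJ e] | w != set0) F (mix y0 y1 w)).

Definition system_of_measures (V : nat -> J -> finType) (H : {set {set J}})
  (nu : forall N (e : {set J}), Ve (V N) e -> R) : Prop :=
  (forall N e x, e \in H -> 0 <= nu N e x) /\
  (forall e, e \in H -> tends_to (fun N => avg (nu N e)) 1).

Definition pseudorandom (V : nat -> J -> finType) (H : {set {set J}})
  (nu : forall N (e : {set J}), Ve (V N) e -> R) : Prop :=
  system_of_measures H nu /\
  (exists C : R, forall N e (x : Ve (V N) e), e \in H ->
     Dop (fun y => nu N e y + 1) x <= C) /\
  (forall n : {set J} -> {set J} -> bool,
     tends_to (fun N => avg (fun p : VJ (V N) * VJ (V N) =>
       \prod_(e in H) \prod_(w in powerset e)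
          nu N e (restr e (mix p.1 p.2 w)) ^+ n e w)) 1) /\
  (forall (e : {set J}) (j : subJ e) (n : {set subJ e} -> bool) (K : nat),
     e \in H ->
     exists C : R, forall N,
       avg (fun y : Ve (V N) e * Ve (V N) e =>
         (avgP (fun z : Ve (V N) e * Ve (V N) e =>
                  [forall i, (i != j) ==> ((z.1 i == y.1 i) && (z.2 i == y.2 i))])
               (fun z => \prod_(w in powerset [set: subJ e])
                           nu N e (mix z.1 z.2 w) ^+ n w)) ^+ K) <= C).

Definition Q (V : J -> finType) (H : {set {set J}})
  (nu f : forall e : {set J}, Ve V e -> R) (J' : {set J}) : R :=
  avgP (fun p : VJ V * VJ V => [forall j, (j \notin J') ==> (p.1 j == p.2 j)])
    (fun p =>
      (\prod_(e in H | J' \subset e) \prod_(w in powerset J')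
          f e (restr e (mix p.1 p.2 w))) *
      (\prod_(e in H | ~~ (J' \subset e)) \prod_(w in powerset (e :&: J'))
          nu e (restr e (mix p.1 p.2 w)))).

End Main.

From HB Require Import structures.
From mathcomp Require Import all_boot all_order all_algebra.
From mathcomp Require Import reals.
From mathcomp Require Import ring lra.
Set Implicit Arguments. Unset Strict Implicit. Unset Printing Implicit Defensive.
Import Order.TTheory GRing.Theory Num.Theory.
Local Open Scope ring_scope.

(* Split the integrand of [Q J'] into the factors from the edges through [j0]
   and those avoiding [j0]. The latter do not see the coordinate [j0] at all and
   are dominated by the weight [nu_weight], a product of [nu]'s. Averaging first
   over the common value of the coordinate [j0] writes [Q J'] as [E (Qout * A)],
   where [A] is the average over that value of the factor from the edges through
   [j0]. Cauchy-Schwarz with weight [nu_weight] gives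
   [|Q J'|^2 <= E nu_weight * E (nu_weight * A^2)]; doubling the coordinate
   [j0] identifies the last average with [Q (j0 |: J')], and [E nu_weight] is
   one of the averages of condition (ii), hence [1 + o(1)]. *)

Section Averages.
Variable R : realType.
Implicit Types (T U : finType).

Lemma avgPE T (P : pred T) (F : T -> R) :
  avgP P F = (\sum_(t | P t) F t) / \sum_(t | P t) 1.
Proof. by rewrite /avgP -sum1_card natr_sum. Qed.

Lemma avgP_ge0 T (P : pred T) (F : T -> R) :
  (forall t, P t -> 0 <= F t) -> 0 <= avgP P F.
Proof. by move=> F0; rewrite divr_ge0 ?sumr_ge0. Qed.

Lemma ler_avgP T (P : pred T) (F G : T -> R) :
  (forall t, P t -> F t <= G t) -> avgP P F <= avgP P G.
Proof. by move=> FG; rewrite ler_wpM2r ?invr_ge0 ?ler_sum. Qed.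

Lemma ler_norm_avgP T (P : pred T) (F : T -> R) :
  `|avgP P F| <= avgP P (fun t => `|F t|).
Proof.
rewrite /avgP normrM [`|_^-1|]ger0_norm ?invr_ge0 //.
by rewrite ler_wpM2r ?invr_ge0 ?ler_norm_sum.
Qed.

Lemma eq_avgP T (P : pred T) (F G : T -> R) :
  (forall t, P t -> F t = G t) -> avgP P F = avgP P G.
Proof. by move=> FG; rewrite /avgP (eq_bigr _ FG). Qed.

Lemma eq_avg T (F G : T -> R) : F =1 G -> avg F = avg G.
Proof. by move=> FG; apply: eq_avgP => t _. Qed.

Lemma avgZ T (c : R) (F : T -> R) : avg (fun t => c * F t) = c * avg F.
Proof. by rewrite /avg /avgP -mulr_sumr mulrA. Qed.

Lemma avg_cst T (c : R) : (0 < #|T|)%N -> avg (fun _ : T => c) = c.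
Proof.
move=> T0; rewrite /avg /avgP sumr_const -[c *+ _]mulr_natr mulfK //.
by rewrite pnatr_eq0 -lt0n.
Qed.

Lemma avg_pair T U (G : T * U -> R) :
  avg G = avg (fun t => avg (fun s => G (t, s))).
Proof.
rewrite /avg /avgP -mulr_suml -mulrA -invfM -natrM pair_bigA.
congr (_ / _%:R); [by apply: eq_bigr => -[] | by rewrite mulnC -card_prod].
Qed.

Lemma avg_avgP T U (P : pred T) (F : U -> T -> R) :
  avg (fun u => avgP P (F u)) = avgP P (fun t => avg (fun u => F u t)).
Proof.
rewrite /avg /avgP -mulr_suml exchange_big /= -mulr_suml -!mulrA.
by rewrite [_^-1 * _]mulrC.
Qed.

Lemma sum_cauchy_schwarz T (P : pred T) (w a : T -> R) :
  (forall t, P t -> 0 <= w t) ->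
  (\sum_(t | P t) w t * a t) ^+ 2 <=
  (\sum_(t | P t) w t) * \sum_(t | P t) w t * a t ^+ 2.
Proof.
move=> w0.
set S1 := \sum_(t | P t) w t * a t; set S0 := \sum_(t | P t) w t.
set S2 := \sum_(t | P t) w t * a t ^+ 2.
(* Lagrange's identity: the double sum below equals [2 (S0 S2 - S1^2)]. *)
have : 0 <= \sum_(t | P t) \sum_(s | P s) w t * w s * (a t - a s) ^+ 2.
  apply: sumr_ge0 => t Pt; apply: sumr_ge0 => s Ps.
  by rewrite mulr_ge0 ?sqr_ge0 ?mulr_ge0 ?w0.
have inner t : \sum_(s | P s) w t * w s * (a t - a s) ^+ 2 =
    w t * a t ^+ 2 * S0 + w t * S2 - 2 * (w t * a t * S1).
  have expand s : w t * w s * (a t - a s) ^+ 2 =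
      w t * a t ^+ 2 * w s + w t * (w s * a s ^+ 2) - 2 * (w t * a t * (w s * a s)).
    by rewrite sqrrB; ring.
  rewrite (eq_bigr _ (fun s _ => expand s)) big_split /= sumrN big_split /=.
  by rewrite !mulr_sumr.
rewrite (eq_bigr _ (fun t _ => inner t)) !big_split /= sumrN.
rewrite -!mulr_suml -mulr_sumr -/S0 -/S1 -/S2 -mulr_suml -/S1 => ?; nra.
Qed.

Lemma avgP_cauchy_schwarz T (P : pred T) (w a : T -> R) :
  (forall t, P t -> 0 <= w t) ->
  avgP P (fun t => w t * a t) ^+ 2 <=
  avgP P w * avgP P (fun t => w t * a t ^+ 2).
Proof.
move=> w0; rewrite /avgP expr2 mulrACA [X in _ <= X]mulrACA -!expr2.
by rewrite ler_wpM2r ?exprn_ge0 ?invr_ge0 ?sum_cauchy_schwarz.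
Qed.

Lemma normr_sqrtrB1_le (x : R) : `|Num.sqrt x - 1| <= `|x - 1|.
Proof.
have [x_ge0|x_lt0] := leP 0 x; last first.
  by rewrite ltr0_sqrtr // sub0r normrN normr1 ler0_norm; lra.
have -> : x - 1 = (Num.sqrt x - 1) * (Num.sqrt x + 1).
  by rewrite mulrBl !mulrDr -expr2 sqr_sqrtr //; ring.
by rewrite normrM ler_peMr // ger0_norm; have := sqrtr_ge0 x; lra.
Qed.

(* [P] is in bijection with [U * P2] via [(t, y) |-> u t y], with inverse
   [x |-> (c x, v x)]. *)
Section Fibers.
Variables (T U : finType) (P P2 : pred T) (c : T -> U) (u : U -> T -> T) (v : T -> T).
Hypotheses (Pv : forall x, P x -> P2 (v x)) (P2u : forall t y, P2 y -> P (u t y)).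
Hypotheses (cu : forall t y, P2 y -> c (u t y) = t) (vu : forall t y, P2 y -> v (u t y) = y).
Hypothesis ucv : forall x, P x -> u (c x) (v x) = x.

Lemma sum_fibers (h : T -> R) :
  \sum_(x | P x) h x = \sum_t \sum_(y | P2 y) h (u t y).
Proof.
rewrite (partition_big c predT) //=; apply: eq_bigr => t _.
rewrite (reindex_onto (u t) v); last by move=> x /andP[Px /eqP <-]; rewrite ucv.
apply: eq_bigl => y; apply/andP/idP => [[/andP[Pu _] /eqP <-]|P2y]; first exact: Pv.
by rewrite P2u ?cu ?vu ?eqxx.
Qed.

Lemma avgP_fibers (h : T -> R) :
  avgP P h = avg (fun t => avgP P2 (fun y => h (u t y))).
Proof.
rewrite avgPE !sum_fibers sumr_const /avg /avgP -mulr_suml -[_ *+ _]mulr_natr.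
by rewrite invfM mulrA -[#|P2|]sum1_card natr_sum.
Qed.

End Fibers.

End Averages.

Section PowersetSplit.
Variables (M : Type) (idx : M) (op : Monoid.com_law idx) (T : finType).

Lemma big_powersetU1 (a : T) (A : {set T}) (g : {set T} -> M) : a \notin A ->
  \big[op/idx]_(w in powerset (a |: A)) g w =
  op (\big[op/idx]_(w in powerset A) g w) (\big[op/idx]_(w in powerset A) g (a |: w)).
Proof.
move=> aA; rewrite (bigID (fun w : {set T} => a \in w)) /= Monoid.mulmC.
congr (op _ _).
  by apply: eq_bigl => w; rewrite !powersetE -[in RHS](setU1K aA) subsetD1.
rewrite (reindex_onto (fun w => a |: w) (fun w => w :\ a)) => [|w /andP[_ aw]]; last first.
  exact: setD1K.
apply: eq_bigl => w; rewrite !powersetE setU11 andbT.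
apply/andP/idP => [[sw /eqP <-]|sw]; first by rewrite -(setU1K aA) setSD.
have aw : a \notin w by apply: contra aA => /(subsetP sw).
by rewrite setU1K // setUS.
Qed.

End PowersetSplit.

Lemma mixE (I : finType) (T : I -> finType) (x0 x1 : {dffun forall i : I, T i}) w i :
  mix x0 x1 w i = if i \in w then x1 i else x0 i.
Proof. by rewrite ffunE. Qed.

Section Coordinates.
Variables (R : realType) (J : finType) (V : J -> finType).
Implicit Types (x y : VJ V) (p : VJ V * VJ V) (K e w : {set J}).

Lemma restr_ext e x y : {in e, forall j, x j = y j} -> restr e x = restr e y.
Proof. by move=> exy; apply/ffunP => i; rewrite !ffunE exy ?(valP i). Qed.

Definition agree_off K x y : bool := [forall j, (j \notin K) ==> (x j == y j)].

Lemma agree_offP K x y : reflect (forall j, j \notin K -> x j = y j) (agree_off K x y).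
Proof.
apply: (iffP forallP) => [xy j jK|xy j]; first exact/eqP/(implyP (xy j)).
by apply/implyP => /xy ->.
Qed.

Lemma agree_off_mix K x y : agree_off K (mix x y K) x.
Proof. by apply/agree_offP => j /negPf jK; rewrite mixE jK. Qed.

Variables (J' : {set J}) (b : VJ V).

Definition agreeing_mix K x : {t : VJ V | agree_off K t b} :=
  exist _ (mix b x K) (agree_off_mix K b x).

Let agree_off_J' p := agree_off J' p.1 p.2.

(* The part off [J'] of the second point is indexed by the points that agree
   with [b] on [J']. *)
Lemma avg_agree_off (h : VJ V * VJ V -> R) :
  avg h = avg (fun t : {x : VJ V | agree_off (~: J') x b} =>
    avgP agree_off_J' (fun p => h (p.1, mix (val t) p.2 J'))).
Proof.
rewrite {1}/avg; apply: (avgP_fibers (P2 := agree_off_J')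
  (c := fun p => agreeing_mix (~: J') p.2) (u := fun t p => (p.1, mix (val t) p.2 J'))
  (v := fun p => (p.1, mix p.1 p.2 J'))) => // [p _|t y _|t [y1 y2]|[x1 x2] _].
- by apply/agree_offP => j /negPf jJ'; rewrite mixE jJ'.
- apply: val_inj; apply/ffunP => j /=; rewrite !mixE inE.
  by have [jJ'|] //= := boolP (j \in J'); rewrite (agree_offP _ _ _ (valP t)) // inE jJ'.
- move/agree_offP=> /= yJ'; congr pair; apply/ffunP => j; rewrite !mixE.
  by case: (boolP (j \in J')) => // /yJ'.
- by congr pair; apply/ffunP => j; rewrite !mixE inE; case: (j \in J').
Qed.

Variable j0 : J.
Hypothesis j0J' : j0 \notin J'.

(* A copy of [V j0] that avoids dependent casts: the points agreeing with [b]
   off [j0]. *)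
Local Notation Vj0 := {x : VJ V | agree_off [set j0] x b}.

Definition base_fiber p := agree_off J' p.1 p.2 && (p.1 j0 == b j0).

Definition set_j0 p x y := (mix p.1 x [set j0], mix p.2 y [set j0]).

Lemma mix1E x y j : mix x y [set j0] j = if j == j0 then y j else x j.
Proof. by rewrite mixE inE. Qed.

Lemma agree_off_set_j0 p x : agree_off_J' p -> agree_off_J' (set_j0 p x x).
Proof.
move/agree_offP=> pJ'; apply/agree_offP => j jJ' /=.
by rewrite !mix1E; case: eqP => // _; apply: pJ'.
Qed.

Lemma base_fiber_set_j0 p : agree_off_J' p -> base_fiber (set_j0 p b b).
Proof.
by move=> pJ'; rewrite /base_fiber /= mix1E !eqxx andbT; apply: agree_off_set_j0.
Qed.

Lemma base_fiber_j0 p : base_fiber p -> p.1 j0 = b j0 /\ p.2 j0 = b j0.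
Proof. by case/andP=> /agree_offP pJ' /eqP p1; rewrite -pJ'. Qed.

Lemma agreeing_mix_mix1 x (t : Vj0) : agreeing_mix [set j0] (mix x (val t) [set j0]) = t.
Proof.
apply: val_inj; apply/ffunP => j /=; rewrite !mix1E.
by case: eqP => [->|/eqP jj0] //; rewrite (agree_offP _ _ _ (valP t)) // inE.
Qed.

Lemma set_j0K p x y : base_fiber p -> set_j0 (set_j0 p x y) b b = p.
Proof.
case/base_fiber_j0; case: p => p1 p2 /= p1b p2b.
by congr pair; apply/ffunP => j; rewrite !mix1E; case: eqP => // ->.
Qed.

Lemma set_j0_base p x y : p.1 j0 = x j0 -> p.2 j0 = y j0 ->
  set_j0 (set_j0 p b b) x y = p.
Proof.
case: p => p1 p2 /= p1x p2y.
by congr pair; apply/ffunP => j; rewrite !mix1E; case: eqP => // ->.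
Qed.

Lemma avgP_agree_off_set_j0 (h : VJ V * VJ V -> R) :
  avgP agree_off_J' h =
  avgP base_fiber (fun p => avg (fun t : Vj0 => h (set_j0 p (val t) (val t)))).
Proof.
rewrite -avg_avgP; apply: (avgP_fibers (c := fun p => agreeing_mix [set j0] p.1)
  (u := fun t p => set_j0 p (val t) (val t)) (v := fun p => set_j0 p b b)).
- exact: base_fiber_set_j0.
- by move=> t p /andP[pJ' _]; apply: agree_off_set_j0.
- by move=> t p _; apply: agreeing_mix_mix1.
- by move=> t p; apply: set_j0K.
- move=> p /agree_offP pJ'; apply: set_j0_base; rewrite /= mix1E eqxx //.
  by rewrite pJ'.
Qed.

Lemma base_fiber_set_j0U p : agree_off (j0 |: J') p.1 p.2 -> base_fiber (set_j0 p b b).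
Proof.
move/agree_offP=> pJ'; rewrite /base_fiber /= mix1E !eqxx andbT.
apply/agree_offP => j jJ' /=; rewrite !mix1E; case: eqP => // /eqP jj0.
by rewrite pJ' // !inE negb_or jj0.
Qed.

Lemma agree_offU_set_j0 p x y :
  base_fiber p -> agree_off (j0 |: J') (set_j0 p x y).1 (set_j0 p x y).2.
Proof.
case/andP=> /agree_offP pJ' _; apply/agree_offP => j; rewrite !inE negb_or => /andP[jj0 jJ'].
by rewrite /= !mix1E (negPf jj0) pJ'.
Qed.

Lemma avgP_agree_offU_set_j0 (h : VJ V * VJ V -> R) :
  avgP (fun p => agree_off (j0 |: J') p.1 p.2) h =
  avgP base_fiber (fun p =>
    avg (fun t : Vj0 => avg (fun s : Vj0 => h (set_j0 p (val t) (val s))))).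
Proof.
under [RHS]eq_avgP => p _ do
  rewrite -(avg_pair (fun ts : Vj0 * Vj0 => h (set_j0 p (val ts.1) (val ts.2)))).
rewrite -avg_avgP; apply: (avgP_fibers
  (c := fun p => (agreeing_mix [set j0] p.1, agreeing_mix [set j0] p.2))
  (u := fun ts p => set_j0 p (val ts.1) (val ts.2)) (v := fun p => set_j0 p b b)).
- exact: base_fiber_set_j0U.
- by move=> ts p; apply: agree_offU_set_j0.
- by move=> [t s] p _; rewrite /= !agreeing_mix_mix1.
- by move=> ts p; apply: set_j0K.
- by move=> p _; apply: set_j0_base; rewrite /= mix1E eqxx.
Qed.

Lemma card_agreeing_gt0 K : (0 < #|{: {x : VJ V | agree_off K x b}}|)%N.
Proof. by apply/card_gt0P; exists (agreeing_mix K b). Qed.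

Lemma restr_set_j0 e w p x y : j0 \notin e ->
  restr e (mix (set_j0 p x y).1 (set_j0 p x y).2 w) = restr e (mix p.1 p.2 w).
Proof.
move=> j0e; apply: restr_ext => j je; rewrite !mixE !inE.
by have /negPf -> : j != j0 by apply: contraNneq j0e => <-.
Qed.

Lemma mix_set_j0 p x y w : j0 \notin w ->
  mix (set_j0 p x y).1 (set_j0 p x y).2 w = mix (set_j0 p x x).1 (set_j0 p x x).2 w.
Proof.
by move=> j0w; apply/ffunP => j; rewrite !mixE !inE; case: eqP => // ->; rewrite (negPf j0w).
Qed.

Lemma mix_set_j0U p x y w : j0 \notin w ->
  mix (set_j0 p x y).1 (set_j0 p x y).2 (j0 |: w) = mix (set_j0 p y y).1 (set_j0 p y y).2 w.
Proof.
by move=> j0w; apply/ffunP => j; rewrite !mixE !inE; case: eqP => //= ->; rewrite (negPf j0w).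
Qed.

Lemma prod_cube_set_j0U (g : VJ V -> R) (E : {set J}) p x y : j0 \notin E ->
  \prod_(w in powerset (j0 |: E)) g (mix (set_j0 p x y).1 (set_j0 p x y).2 w) =
  (\prod_(w in powerset E) g (mix (set_j0 p x x).1 (set_j0 p x x).2 w)) *
  \prod_(w in powerset E) g (mix (set_j0 p y y).1 (set_j0 p y y).2 w).
Proof.
move=> j0E; rewrite big_powersetU1 //.
have j0w w : w \in powerset E -> j0 \notin w.
  by rewrite powersetE => wE; apply: contra j0E => /(subsetP wE).
by congr (_ * _); apply: eq_bigr => w /j0w j0_w; rewrite ?mix_set_j0U ?mix_set_j0.
Qed.

End Coordinates.

Section Factors.
Variables (R : realType) (J : finType) (V : J -> finType) (H : {set {set J}}).
Variables (nu f : forall e : {set J}, Ve V e -> R).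
Arguments nu : clear implicits.
Arguments f : clear implicits.
Hypothesis nu_ge0 : forall e x, e \in H -> 0 <= nu e x.
Hypothesis f_le_nu : forall e, e \in H -> forall x, `|f e x| <= nu e x.
Variables (J' : {set J}) (j0 : J).
Hypothesis j0J' : j0 \notin J'.
Implicit Types (x y : VJ V) (p : VJ V * VJ V).

Definition Qterm (K : {set J}) p :=
  (\prod_(e in H | K \subset e) \prod_(w in powerset K) f e (restr e (mix p.1 p.2 w))) *
  (\prod_(e in H | ~~ (K \subset e)) \prod_(w in powerset (e :&: K))
     nu e (restr e (mix p.1 p.2 w))).

Lemma QE K : Q H nu f K = avgP (fun p => agree_off K p.1 p.2) (Qterm K).
Proof. by []. Qed.

Definition Qpart (E : pred {set J}) p :=
  (\prod_(e | (e \in H) && (J' \subset e) && E e)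
     \prod_(w in powerset J') f e (restr e (mix p.1 p.2 w))) *
  (\prod_(e | (e \in H) && ~~ (J' \subset e) && E e)
     \prod_(w in powerset (e :&: J')) nu e (restr e (mix p.1 p.2 w))).

Local Notation Qin := (Qpart (fun e => j0 \in e)).
Local Notation Qout := (Qpart (fun e => j0 \notin e)).

Definition nu_weight p :=
  \prod_(e in H | j0 \notin e) \prod_(w in powerset (e :&: J')) nu e (restr e (mix p.1 p.2 w)).

Lemma Qterm_split p : Qterm J' p = Qout p * Qin p.
Proof.
rewrite /Qterm (bigID (fun e : {set J} => j0 \in e) (fun e => (e \in H) && (J' \subset e))).
by rewrite [X in _ * X](bigID (fun e : {set J} => j0 \in e)) mulrACA mulrC.
Qed.

Lemma nu_weight_ge0 p : 0 <= nu_weight p.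
Proof. by apply: prodr_ge0 => e /andP[eH _]; apply: prodr_ge0 => w _; apply: nu_ge0. Qed.

Lemma normr_Qout_le p : `|Qout p| <= nu_weight p.
Proof.
rewrite /nu_weight (bigID (fun e : {set J} => J' \subset e)) /= normrM.
rewrite !(eq_bigl _ _ (fun e => andbAC (e \in H) (j0 \notin e) _)) /=.
apply: ler_pM; rewrite ?normr_ge0 // normr_prod; apply: ler_prod;
  move=> e /andP[/andP[eH JJ'] _]; rewrite normr_ge0 normr_prod /=.
  by rewrite (setIidPr JJ'); apply: ler_prod => w _; rewrite normr_ge0 f_le_nu.
by apply: ler_prod => w _; rewrite ger0_norm ?nu_ge0 ?lexx.
Qed.

Lemma nu_weight_set_j0 p x y : nu_weight (set_j0 j0 p x y) = nu_weight p.
Proof.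
by apply: eq_bigr => e /andP[_ j0e]; apply: eq_bigr => w _; rewrite restr_set_j0.
Qed.

Lemma Qout_set_j0 p x y : Qout (set_j0 j0 p x y) = Qout p.
Proof.
congr (_ * _); apply: eq_bigr => e /andP[_ j0e].
all: by apply: eq_bigr => w _; rewrite restr_set_j0.
Qed.

Lemma nu_weight_mix p x : nu_weight (p.1, mix x p.2 J') = nu_weight p.
Proof.
apply: eq_bigr => e _; apply: eq_bigr => w; rewrite powersetE subsetI => /andP[_ wJ'].
by congr (nu e _); apply: restr_ext => j _; rewrite !mixE; case: ifP => // /(subsetP wJ') ->.
Qed.

Lemma nu_weight_cube p :
  \prod_(e in H) \prod_(w in powerset e)
     nu e (restr e (mix p.1 p.2 w)) ^+ ((w \subset J') && (j0 \notin e)) = nu_weight p.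
Proof.
rewrite (bigID (fun e : {set J} => j0 \notin e)) /= [X in _ * X]big1 ?mulr1;
  last by move=> e /andP[_ /negPf->]; apply: big1 => w _; rewrite andbF.
apply: eq_bigr => e /andP[_ ->]; rewrite powersetI big_mkcond [RHS]big_mkcond /=.
apply: eq_bigr => w _; rewrite in_setI !powersetE andbT.
by case: (w \subset e); case: (w \subset J').
Qed.

Lemma Qterm_set_j0U p x y :
  Qterm (j0 |: J') (set_j0 j0 p x y) =
  nu_weight p * (Qin (set_j0 j0 p x x) * Qin (set_j0 j0 p y y)).
Proof.
set q := set_j0 j0 p x y; set qx := set_j0 j0 p x x; set qy := set_j0 j0 p y y.
have f_part : \prod_(e in H | (j0 |: J') \subset e) \prod_(w in powerset (j0 |: J'))
      f e (restr e (mix q.1 q.2 w)) =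
    (\prod_(e | (e \in H) && (J' \subset e) && (j0 \in e))
       \prod_(w in powerset J') f e (restr e (mix qx.1 qx.2 w))) *
    (\prod_(e | (e \in H) && (J' \subset e) && (j0 \in e))
       \prod_(w in powerset J') f e (restr e (mix qy.1 qy.2 w))).
  rewrite -big_split; apply: eq_big => [e|e _].
    by rewrite subUset sub1set [(j0 \in e) && _]andbC andbA.
  exact: (prod_cube_set_j0U (fun w => f e (restr e w))).
have nu_part : \prod_(e in H | ~~ ((j0 |: J') \subset e))
      \prod_(w in powerset (e :&: (j0 |: J'))) nu e (restr e (mix q.1 q.2 w)) =
    (\prod_(e | (e \in H) && ~~ (J' \subset e) && (j0 \in e))
       \prod_(w in powerset (e :&: J')) nu e (restr e (mix qx.1 qx.2 w))) *
    (\prod_(e | (e \in H) && ~~ (J' \subset e) && (j0 \in e))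
       \prod_(w in powerset (e :&: J')) nu e (restr e (mix qy.1 qy.2 w))) * nu_weight p.
  rewrite (bigID (fun e : {set J} => j0 \in e)) /= -big_split /=; congr (_ * _).
    apply: eq_big => [e|e /andP[_ j0e]].
      by rewrite subUset sub1set; case: (j0 \in e); rewrite ?andbT ?andbF.
    rewrite setIUr (setIidPr _) ?sub1set //.
    apply: (prod_cube_set_j0U (fun w => nu e (restr e w))).
    by rewrite inE (negPf j0J') andbF.
  apply: eq_big => [e|e /andP[_ j0e]].
    by rewrite subUset sub1set; case: (j0 \in e); rewrite ?andbT ?andbF.
  rewrite setIUr (_ : e :&: [set j0] = set0) ?set0U; last first.
    by apply/setP => j; rewrite !inE; apply: contraNF j0e => /andP[je /eqP <-].
  by apply: eq_bigr => w _; rewrite restr_set_j0.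
by rewrite /Qterm /Qpart /= f_part nu_part; ring.
Qed.

Variable b : VJ V.
Local Notation Vj0 := {x : VJ V | agree_off [set j0] x b}.
Local Notation base_fiber := (base_fiber J' b j0).

Definition fiber_mean p := avg (fun t : Vj0 => Qin (set_j0 j0 p (val t) (val t))).

Lemma Q_fiber : Q H nu f J' = avgP base_fiber (fun p => Qout p * fiber_mean p).
Proof.
rewrite QE (avgP_agree_off_set_j0 b j0J'); apply: eq_avgP => p _.
by rewrite -avgZ; apply: eq_avg => t; rewrite Qterm_split Qout_set_j0.
Qed.

Lemma QU_fiber :
  Q H nu f (j0 |: J') = avgP base_fiber (fun p => nu_weight p * fiber_mean p ^+ 2).
Proof.
rewrite QE (avgP_agree_offU_set_j0 b j0J'); apply: eq_avgP => p _.
under eq_avg => t do under eq_avg => s do rewrite Qterm_set_j0U mulrA.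
under eq_avg => t do rewrite avgZ mulrC.
by rewrite avgZ avgZ mulrCA expr2.
Qed.

Lemma avg_nu_weight : avg nu_weight = avgP base_fiber nu_weight.
Proof.
rewrite (avg_agree_off J' b).
under eq_avg => t do under eq_avgP => p _ do rewrite nu_weight_mix.
rewrite avg_cst ?card_agreeing_gt0 // (avgP_agree_off_set_j0 b j0J').
apply: eq_avgP => p _; under eq_avg => t do rewrite nu_weight_set_j0.
by rewrite avg_cst ?card_agreeing_gt0.
Qed.

Lemma normr_Q_le :
  `|Q H nu f J'| <= Num.sqrt (avg nu_weight) * Num.sqrt `|Q H nu f (j0 |: J')|.
Proof.
have QU_ge0 : 0 <= avgP base_fiber (fun p => nu_weight p * fiber_mean p ^+ 2).
  by apply: avgP_ge0 => p _; rewrite mulr_ge0 ?sqr_ge0 ?nu_weight_ge0.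
rewrite avg_nu_weight Q_fiber QU_fiber (ger0_norm QU_ge0).
rewrite -sqrtrM; last by apply: avgP_ge0 => p _; apply: nu_weight_ge0.
pose W := avgP base_fiber (fun p => nu_weight p * `|fiber_mean p|).
have W_ge0 : 0 <= W by apply: avgP_ge0 => p _; rewrite mulr_ge0 ?normr_ge0 ?nu_weight_ge0.
apply: (le_trans (ler_norm_avgP _ _)); apply: (@le_trans _ _ W).
  by apply: ler_avgP => p _; rewrite normrM ler_wpM2r ?normr_ge0 ?normr_Qout_le.
rewrite -(ger0_norm W_ge0) -sqrtr_sqr ler_wsqrtr //.
have -> : avgP base_fiber (fun p => nu_weight p * fiber_mean p ^+ 2) =
           avgP base_fiber (fun p => nu_weight p * `|fiber_mean p| ^+ 2).
  by apply: eq_avgP => p _; rewrite real_normK ?num_real.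
by apply: avgP_cauchy_schwarz => p _; apply: nu_weight_ge0.
Qed.

End Factors.

Lemma tends_to_sqrtrB1 (R : realType) (u : nat -> R) :
  tends_to u 1 -> tends_to (fun N => Num.sqrt (u N) - 1) 0.
Proof.
move=> u1 eps eps_gt0; have [N0 uN] := u1 eps eps_gt0.
by exists N0 => N /uN; rewrite subr0; apply: le_trans (normr_sqrtrB1_le _).
Qed.

Theorem mainTheorem9 (R : realType) (J : finType) (V : nat -> J -> finType)
  (d : nat) (H : {set {set J}})
  (nu : forall (N : nat) (e : {set J}), Ve (V N) e -> R) :
  (forall N, hypergraph_system (V N) d H) ->
  pseudorandom H nu ->
  forall (J' : {set J}) (j0 : J), J' \proper [set: J] -> j0 \notin J' ->
  exists c : nat -> R, tends_to c 0 /\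
    forall (N : nat) (f : forall e : {set J}, Ve (V N) e -> R),
      (forall e, e \in H -> forall x : Ve (V N) e, `|f e x| <= nu N e x) ->
      `|Q H (nu N) f J'| <= (1 + c N) * Num.sqrt `|Q H (nu N) f (j0 |: J')|.
Proof.
move=> hs [[nu_ge0 _] [_ [cube_avg1 _]]] J' j0 _ j0J'.
pose n (e w : {set J}) := (w \subset J') && (j0 \notin e).
pose a N := avg (fun p : VJ (V N) * VJ (V N) =>
  \prod_(e in H) \prod_(w in powerset e) nu N e (restr e (mix p.1 p.2 w)) ^+ n e w).
exists (fun N => Num.sqrt (a N) - 1); split; first exact/tends_to_sqrtrB1/cube_avg1.
move=> N f f_le_nu; rewrite addrC subrK.
have [_ _ V_gt0] := hs N.
pose b : VJ (V N) := @finfun J (V N) (fun j => xchoose (elimT card_gt0P (V_gt0 j))).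
rewrite /a; under eq_avg => p do rewrite nu_weight_cube.
by apply: (normr_Q_le _ f_le_nu j0J' b) => e x /nu_ge0; apply.
Qed.
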